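(* Let $k$ be a positive integer, $a=12k+2$, $S=\{a,a+2,a+\tfrac a2\}$, $G=\langle S\rangle$. Let $A_{0,k}=\{0\}$ and, for $i\in[1,3k]$, $A_{i,k}=[ia,\,ia+2i]_2$ and $B_{i,k}=A_{i-1,k}+\{a+\tfrac a2\}$. For $i\in[3k+1,6k]$ let $D_{i,k}=[ia+\tfrac a2,\,ia+\tfrac a2+2(i-3k)]\cup[ia+\tfrac a2+2(i-3k+1),\,ia+\tfrac a2+6k]_2$. Let $C_{3k+1,k}=[(3k+1)a,(3k+1)a+6k]_2$, $C_{3k+2,k}=[(3k+2)a,(3k+2)a+6k]_2$, and $C_{i,k}=D_{i-2,k}+\{a+\tfrac a2\}$ for $i\in[3k+3,6k+1]$. Let $E=[(6k+1)a+\tfrac a2,\infty[$ and $H_{8,k}=A_{0,k}\cup\bigcup_{i=1}^{3k}(A_{i,k}\cup B_{i,k})\cup\bigcup_{i=3k+1}^{6k+1}C_{i,k}\cup\bigcup_{i=3k+1}^{6k}D_{i,k}\cup E$. Then: (1) $x\in G$ if and only if $x=qa+2r+s(a+\tfrac a2)$ for some $q,r,s\in\mathbb{N}$ with $0\le r\le q$; (2) $G=H_{8,k}$; (3) $A_{i,k}<B_{i,k}$ for $i\in[1,3k]$; $B_{i,k}<A_{i+1,k}$ for $i\in[1,3k-1]$; $B_{3k,k}<C_{3k+1,k}$; $C_{i,k}<D_{i,k}$ for $i\in[3k+1,6k]$; $D_{i,k}<C_{i+1,k}$ for $i\in[3k+1,6k]$; $C_{6k+1,k}<E$; (4) $H_{8,k}$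 is a $3$-permutation numerical semigroup.
   Context: $\mathbb{N}=\{0,1,2,\dots\}$. A numerical semigroup is a submonoid $G$ of $(\mathbb{N},+,0)$ with $\mathbb{N}\setminus G$ finite; $\langle S\rangle$ is the submonoid generated by $S$. Writing the elements of a numerical semigroup as $0=g_0<g_1<g_2<\cdots$, it is an $n$-permutation numerical semigroup if it is generated by $\{g_1,\dots,g_n\}$ and for every $k\in\mathbb{N}$ the tuple $(g_{kn+1}\bmod n,\dots,g_{kn+n}\bmod n)$ contains exactly one representative of each residue class mod $n$. Notation: $[u,v]=\{x\in\mathbb{N}:u\le x\le v\}$, $[u,v]_2=\{x\in[u,v]:x\equiv u\pmod 2\}$, $[u,\infty[=\{x\in\mathbb{N}:x\ge u\}$; $X+Y=\{x+y:x\in X,y\in Y\}$; for nonempty $X,Y$, $X<Y$ means $x<y$ for all $x\in X,y\in Y$. *)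

From Stdlib Require Import Arith Lia List.

Definition nset := nat -> Prop.

Inductive gen (S : nset) : nset :=
| gen0 : gen S 0
| gen_in : forall x, S x -> gen S x
| gen_add : forall x y, gen S x -> gen S y -> gen S (x + y).

Definition numerical_semigroup (G : nset) : Prop :=
  G 0 /\ (forall x y, G x -> G y -> G (x + y)) /\
  (exists l : list nat, forall x, ~ G x -> In x l).

Definition is_enum (G : nset) (g : nat -> nat) : Prop :=
  (forall i j, i < j -> g i < g j) /\ (forall x, G x <-> exists i, g i = x).

Definition perm_num_semigroup (n : nat) (G : nset) : Prop :=
  numerical_semigroup G /\
  exists g, is_enum G g /\
    (forall x, G x <-> gen (fun y => exists j, 1 <= j <= n /\ y = g j) x) /\
    (forall m c, c < n ->
       exists! j, (1 <= j <= n) /\ g (m * n + j) mod n = c).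

Definition iv (u v : nat) : nset := fun x => u <= x <= v.
Definition iv2 (u v : nat) : nset := fun x => u <= x <= v /\ x mod 2 = u mod 2.
Definition ivinf (u : nat) : nset := fun x => u <= x.
Definition sumset (X Y : nset) : nset := fun z => exists x y, X x /\ Y y /\ z = x + y.
Definition single (a : nat) : nset := fun x => x = a.
Definition union (X Y : nset) : nset := fun x => X x \/ Y x.
Definition setlt (X Y : nset) : Prop :=
  (exists x, X x) /\ (exists y, Y y) /\ (forall x y, X x -> Y y -> x < y).

Definition aa (k : nat) : nat := 12 * k + 2.
Definition ha (k : nat) : nat := aa k / 2.

Definition Gk (k : nat) : nset :=
  gen (fun x => x = aa k \/ x = aa k + 2 \/ x = aa k + ha k).

Definition Aset (k i : nat) : nset :=
  match i with
  | 0 => single 0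
  | _ => iv2 (i * aa k) (i * aa k + 2 * i)
  end.

Definition Bset (k i : nat) : nset := sumset (Aset k (i - 1)) (single (aa k + ha k)).

Definition Dset (k i : nat) : nset :=
  union (iv (i * aa k + ha k) (i * aa k + ha k + 2 * (i - 3 * k)))
        (iv2 (i * aa k + ha k + 2 * (i - 3 * k + 1)) (i * aa k + ha k + 6 * k)).

Definition Cset (k i : nat) : nset :=
  if i =? 3 * k + 1 then iv2 ((3 * k + 1) * aa k) ((3 * k + 1) * aa k + 6 * k)
  else if i =? 3 * k + 2 then iv2 ((3 * k + 2) * aa k) ((3 * k + 2) * aa k + 6 * k)
  else sumset (Dset k (i - 2)) (single (aa k + ha k)).

Definition Eset (k : nat) : nset := ivinf ((6 * k + 1) * aa k + ha k).

Definition H8 (k : nat) : nset := fun x =>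
  Aset k 0 x
  \/ (exists i, 1 <= i <= 3 * k /\ (Aset k i x \/ Bset k i x))
  \/ (exists i, 3 * k + 1 <= i <= 6 * k + 1 /\ Cset k i x)
  \/ (exists i, 3 * k + 1 <= i <= 6 * k /\ Dset k i x)
  \/ Eset k x.

From Stdlib Require Import Arith Bool Lia List ZifyNat ZifyBool.

(* In coordinates x = i a + t with 0 <= t < a = 12k + 2, a sum q a + 2 r + s (a + a/2)
   with r <= q can be normalised to s <= 1 because 2 (a + a/2) = 3 a; this describes
   the semigroup layer by layer.  The blocks A and C are the parts t <= 6k of the
   layers, B and D the parts t > 6k, and E is the tail, which gives (2) and (3).
   For (4), the successor of an element and its rank (the number of smaller
   elements) are explicit piecewise linear functions of the coordinates.  Three
   consecutive elements are pairwise incongruent mod 3 iff the two gaps between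
   them have the same nonzero residue.  Along the layers the gaps come in runs of
   constant residue 1 or 2; a gap of any other residue follows an element of rank
   divisible by 3, and a run only ends after an element of rank not congruent to 1,
   so each triple g(3m+1), g(3m+2), g(3m+3) meets every residue. *)

Lemma gen_mono (S T : nset) x : (forall y, S y -> T y) -> gen S x -> gen T x.
Proof. intros hST; induction 1; [apply gen0 | apply gen_in, hST | apply gen_add]; auto. Qed.

Lemma gen_mul (S : nset) y n : S y -> gen S (n * y).
Proof.
  intros hy; induction n as [|n IH]; [apply gen0|].
  apply gen_add; [apply gen_in|]; assumption.
Qed.

Lemma gen_three_iff a b x :
  gen (fun y => y = a \/ y = a + 2 \/ y = b) x <->
  exists q r s, r <= q /\ x = q * a + 2 * r + s * b.
Proof.
  split.
  - induction 1 as [| y [-> | [-> | ->]]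
                   | y z _ (q & r & s & hr & ->) _ (q' & r' & s' & hr' & ->)].
    + exists 0, 0, 0; lia.
    + exists 1, 0, 0; lia.
    + exists 1, 1, 0; lia.
    + exists 0, 0, 1; lia.
    + exists (q + q'), (r + r'), (s + s'); lia.
  - intros (q & r & s & hr & ->).
    destruct (Nat.le_exists_sub r q hr) as (d & -> & _).
    replace ((d + r) * a + 2 * r + s * b) with (d * a + r * (a + 2) + s * b) by lia.
    repeat apply gen_add; apply gen_mul; auto.
Qed.

Lemma lex_lt a i j t t' :
  t < a -> t' < a -> i * a + t < j * a + t' <-> i < j \/ i = j /\ t < t'.
Proof.
  intros ht ht'; split.
  - intros h; destruct (lt_eq_lt_dec i j) as [[hij | <-] | hji]; [left; exact hij | lia |].
    enough (j * a + a <= i * a) by lia.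
    replace (j * a + a) with (S j * a) by lia; apply Nat.mul_le_mono_r; lia.
  - intros [hij | [<- htt]]; [|lia].
    enough (i * a + a <= j * a) by lia.
    replace (i * a + a) with (S i * a) by lia; apply Nat.mul_le_mono_r; lia.
Qed.

Lemma layer_index a i j t : t < a -> i * a <= j * a + t < S i * a -> j = i.
Proof.
  intros ht [hlo hhi]; destruct (lt_eq_lt_dec j i) as [[h | h] | h]; [exfalso | exact h | exfalso].
  - assert (j * a + t < i * a + 0) by (apply lex_lt; lia); lia.
  - assert (S i * a + 0 < j * a + t \/ S i * a + 0 = j * a + t); [|lia].
    destruct (Nat.eq_dec (S i) j) as [<- | hne]; [lia | left; apply lex_lt; lia].
Qed.

Section SuccessorEnumeration.
Variables (P : nset) (next : nat -> nat).
Hypothesis P0 : P 0.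
Hypothesis next_mem : forall x, P x -> P (next x).
Hypothesis next_gt : forall x, P x -> x < next x.
Hypothesis next_least : forall x z, P x -> x < z < next x -> ~ P z.

Local Notation enum n := (Nat.iter n next 0).

Lemma enum_mem n : P (enum n).
Proof. induction n; [exact P0 | apply next_mem; assumption]. Qed.

Lemma enum_lt_succ n : enum n < enum (S n).
Proof. apply next_gt, enum_mem. Qed.

Lemma enum_increasing i j : i < j -> enum i < enum j.
Proof.
  induction 1 as [|j _ IH]; [apply enum_lt_succ|].
  pose proof (enum_lt_succ j); lia.
Qed.

Lemma enum_onto x : P x -> exists n, enum n = x.
Proof.
  intros hx.
  assert (hge : forall n, n <= enum n)
    by (induction n; [lia | pose proof (enum_lt_succ n); lia]).
  assert (hbelow : forall n, x < enum n -> exists m, enum m = x).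
  { induction n as [|n IH]; intros hlt; [simpl in hlt; lia|].
    destruct (lt_eq_lt_dec x (enum n)) as [[h | h] | h]; [apply IH, h | exists n; auto |].
    exfalso; apply (next_least (enum n) x (enum_mem n)); auto. }
  apply (hbelow (S x)); specialize (hge (S x)); lia.
Qed.

Lemma iter_next_is_enum : is_enum P (fun n => enum n).
Proof.
  split; [exact enum_increasing|].
  intros x; split; [apply enum_onto | intros [n <-]; apply enum_mem].
Qed.

Lemma rank_enum (rank : nat -> nat) :
  rank 0 = 0 -> (forall x, P x -> rank (next x) = S (rank x)) -> forall n, rank (enum n) = n.
Proof.
  intros r0 rS; induction n as [|n IH]; [exact r0|].
  simpl; rewrite rS by apply enum_mem; congruence.
Qed.
End SuccessorEnumeration.

Lemma residues_of_equal_gaps (g : nat -> nat) m c :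
  g (m * 3 + 1) <= g (m * 3 + 2) <= g (m * 3 + 3) ->
  (g (m * 3 + 2) - g (m * 3 + 1)) mod 3 = (g (m * 3 + 3) - g (m * 3 + 2)) mod 3 ->
  (g (m * 3 + 2) - g (m * 3 + 1)) mod 3 <> 0 ->
  c < 3 -> exists! j, (1 <= j <= 3) /\ g (m * 3 + j) mod 3 = c.
Proof.
  set (x1 := g (m * 3 + 1)); set (x2 := g (m * 3 + 2)); set (x3 := g (m * 3 + 3)).
  intros hle heq hnz hc.
  assert (hcases : c = x1 mod 3 \/ c = x2 mod 3 \/ c = x3 mod 3) by lia.
  assert (hj : forall j, 1 <= j <= 3 -> j = 1 \/ j = 2 \/ j = 3) by lia.
  destruct hcases as [-> | [-> | ->]];
    [exists 1 | exists 2 | exists 3]; (split; [split; [lia | reflexivity]|]);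
    intros j [hj3 hjc]; destruct (hj j hj3) as [-> | [-> | ->]]; fold x1 x2 x3 in hjc; lia.
Qed.

Lemma square_mod3 i : (i * i) mod 3 = 0 /\ i mod 3 = 0 \/ (i * i) mod 3 = 1 /\ i mod 3 <> 0.
Proof.
  rewrite (Nat.div_mod_eq i 3); set (q := i / 3).
  assert (hr : i mod 3 < 3) by lia; set (r := i mod 3) in *; clearbody q r.
  destruct r as [|[|[|r]]]; [..|lia]; lia.
Qed.

Lemma ha_eq k : ha k = 6 * k + 1.
Proof. unfold ha, aa; lia. Qed.

(* The coordinates (i, u, p), with p <= 1 and 2 u + p < a = 12k + 2, stand for
   i a + 2 u + p.  The three clauses are the sums q a + 2 r + s (a + a/2) with
   r <= q and s = 0, resp. s = 1 and r <= 3k, resp. s = 1 and r > 3k. *)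
Definition layer_mem (k i u p : nat) : Prop :=
  (p = 0 /\ u <= i) \/ (p = 1 /\ 3 * k <= u < 3 * k + i) \/ (p = 1 /\ u + 3 * k + 3 <= i).

Definition layered (k x : nat) : Prop :=
  exists i u p, p <= 1 /\ 2 * u + p < 12 * k + 2 /\
    x = i * (12 * k + 2) + 2 * u + p /\ layer_mem k i u p.

Section Layers.
Variable k : nat.
Hypothesis hk : 1 <= k.

Local Notation a := (12 * k + 2).

Ltac unfold_sets := unfold iv2, iv, ivinf, sumset, single, union in *;
  rewrite ?ha_eq in *; unfold aa in *.

Lemma Aset_coord i x : 1 <= i -> Aset k i x <-> exists u, u <= i /\ x = i * a + 2 * u.
Proof.
  intros hi; destruct i as [|i]; [lia|]; unfold Aset; unfold_sets; split.
  - intros hx; exists ((x - S i * a) / 2); lia.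
  - intros (u & hu & ->); lia.
Qed.

Lemma Bset_coord i x :
  1 <= i -> Bset k i x <-> exists u, 3 * k <= u < 3 * k + i /\ x = i * a + 2 * u + 1.
Proof.
  intros hi; destruct i as [|i]; [lia|]; unfold Bset; replace (S i - 1) with i by lia.
  assert (hA : forall y, Aset k i y <-> exists v, v <= i /\ y = i * a + 2 * v).
  { intros y; destruct i as [|i]; [|apply Aset_coord; lia].
    unfold Aset, single; split; [intros ->; exists 0 | intros (v & hv & ->)]; lia. }
  unfold_sets; split.
  - intros (y & z & hy & -> & ->); apply hA in hy as (v & hv & ->).
    exists (v + 3 * k); lia.
  - intros (u & hu & ->); exists (i * a + 2 * (u - 3 * k)), (a + (6 * k + 1)).
    rewrite hA; split; [exists (u - 3 * k)|]; lia.
Qed.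

Lemma Cset_coord i x :
  3 * k + 1 <= i <= 6 * k + 1 ->
  Cset k i x <-> exists u p, (p = 0 /\ u <= 3 * k \/ p = 1 /\ u + 3 * k + 3 <= i) /\
                             x = i * a + 2 * u + p.
Proof.
  intros hi; unfold Cset.
  destruct (Nat.eqb_spec i (3 * k + 1)) as [e1 | hi1];
    [| destruct (Nat.eqb_spec i (3 * k + 2)) as [e2 | hi2]].
  1,2: unfold_sets; split;
       [ intros hx; exists ((x - i * a) / 2), 0 | intros (u & p & hu & ->) ]; subst i; lia.
  destruct i as [|[|i]]; [lia..|]; replace (S (S i) - 2) with i by lia.
  unfold Dset; unfold_sets; split.
  - intros (y & z & hy & -> & ->).
    exists ((y - i * a - (6 * k + 1)) / 2), ((y - i * a - (6 * k + 1)) mod 2); lia.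
  - intros (u & p & hu & ->).
    exists (i * a + (6 * k + 1) + 2 * u + p), (a + (6 * k + 1)); lia.
Qed.

Lemma Dset_coord i x :
  3 * k + 1 <= i <= 6 * k ->
  Dset k i x <-> exists u p, (p = 0 /\ 3 * k < u <= i \/ p = 1 /\ 3 * k <= u <= 6 * k) /\
                             x = i * a + 2 * u + p.
Proof.
  intros hi; unfold Dset; unfold_sets; split.
  - intros hx; exists ((x - i * a) / 2), ((x - i * a) mod 2); lia.
  - intros (u & p & hu & ->); lia.
Qed.

Lemma Eset_coord i t :
  t < a -> Eset k (i * a + t) <-> 6 * k + 2 <= i \/ i = 6 * k + 1 /\ 6 * k + 1 <= t.
Proof.
  intros ht; unfold Eset; unfold_sets.
  pose proof (lex_lt a i (6 * k + 1) t (6 * k + 1) ht ltac:(lia)); lia.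
Qed.

Lemma layered_Eset x : Eset k x -> layered k x.
Proof.
  pose proof (Nat.div_mod x a ltac:(lia)) as ex.
  pose proof (Nat.mod_upper_bound x a ltac:(lia)) as ht.
  set (i := x / a) in *; set (t := x mod a) in *; clearbody i t.
  replace x with (i * a + t) by lia; rewrite Eset_coord by exact ht.
  exists i, (t / 2), (t mod 2); unfold layer_mem; lia.
Qed.

Lemma layered_repr x :
  layered k x <-> exists q r s, r <= q /\ x = q * aa k + 2 * r + s * (aa k + ha k).
Proof.
  rewrite ha_eq; unfold aa; split.
  - intros (i & u & p & hp & ht & -> & [[-> hu] | [[-> hu] | [-> hu]]]).
    + exists i, u, 0; lia.
    + destruct i as [|i]; [lia|]; exists i, (u - 3 * k), 1; lia.
    + destruct i as [|[|i]]; [lia..|]; exists i, (u + 3 * k + 1), 1; lia.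
  - intros (q & r & s & hr & ->).
    (* 2 (a + a/2) = 3 a *)
    replace (q * a + 2 * r + s * (a + (6 * k + 1)))
      with ((q + 3 * (s / 2)) * a + 2 * r + (s mod 2) * (a + (6 * k + 1))) by lia.
    set (q' := q + 3 * (s / 2)); assert (hr' : r <= q') by lia; clearbody q'.
    assert (hs : s mod 2 < 2) by lia; set (s0 := s mod 2) in *; clearbody s0.
    destruct (le_lt_dec (6 * k + 2) q') as [hq | hq].
    { apply layered_Eset; unfold Eset; unfold_sets.
      enough ((6 * k + 2) * a <= q' * a) by lia. apply Nat.mul_le_mono_r; lia. }
    destruct s0 as [|[|]]; [| | lia].
    + destruct (le_lt_dec r (6 * k)).
      * exists q', r, 0; unfold layer_mem; lia.
      * (* then r = q' = 6k + 1, so 2 r = a *)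
        exists (S q'), 0, 0; unfold layer_mem; lia.
    + destruct (le_lt_dec r (3 * k)).
      * exists (S q'), (3 * k + r), 1; unfold layer_mem; lia.
      * exists (S (S q')), (r - 3 * k - 1), 1; unfold layer_mem; lia.
Qed.

Lemma H8_iff_layered x : H8 k x <-> layered k x.
Proof.
  unfold H8; split.
  - unfold layered, layer_mem.
    intros [h0 | [(i & hi & [hA | hB]) | [(i & hi & hC) | [(i & hi & hD) | hE]]]].
    + unfold Aset, single in h0; subst; exists 0, 0, 0; lia.
    + apply Aset_coord in hA as (u & hu & ->); [exists i, u, 0 | ]; lia.
    + apply Bset_coord in hB as (u & hu & ->); [exists i, u, 1 | ]; lia.
    + apply Cset_coord in hC as (u & p & hu & ->); [exists i, u, p | ]; lia.
    + apply Dset_coord in hD as (u & p & hu & ->); [exists i, u, p | ]; lia.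
    + apply layered_Eset, hE.
  - intros (i & u & p & hp & ht & -> & hL); unfold layer_mem in hL.
    destruct (le_lt_dec i (3 * k)) as [hi | hi].
    + destruct i as [|i].
      { left; unfold Aset, single; lia. }
      right; left; exists (S i); split; [lia|].
      rewrite Aset_coord, Bset_coord by lia.
      destruct hL as [[-> hu] | [[-> hu] | [-> hu]]];
        [left; exists u | right; exists u | ]; lia.
    + rewrite <- Nat.add_assoc.
      destruct (Eset_coord i (2 * u + p) ltac:(lia)) as [_ hE].
      destruct (le_lt_dec (2 * u + p) (6 * k)) as [hs | hs];
        [ destruct (le_lt_dec i (6 * k + 1)) as [hi' | hi']
        | destruct (le_lt_dec i (6 * k)) as [hi' | hi'] ].
      * right; right; left; exists i; split; [lia|].
        rewrite Cset_coord by lia; exists u, p; lia.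
      * right; right; right; right; apply hE; lia.
      * right; right; right; left; exists i; split; [lia|].
        rewrite Dset_coord by lia; exists u, p; lia.
      * right; right; right; right; apply hE; lia.
Qed.

Lemma Gk_iff_H8 x : Gk k x <-> H8 k x.
Proof. unfold Gk; rewrite gen_three_iff, <- layered_repr; symmetry; apply H8_iff_layered. Qed.

Lemma blocks_ordered :
  (forall i, 1 <= i <= 3 * k -> setlt (Aset k i) (Bset k i)) /\
  (forall i, 1 <= i <= 3 * k - 1 -> setlt (Bset k i) (Aset k (i + 1))) /\
  setlt (Bset k (3 * k)) (Cset k (3 * k + 1)) /\
  (forall i, 3 * k + 1 <= i <= 6 * k -> setlt (Cset k i) (Dset k i)) /\
  (forall i, 3 * k + 1 <= i <= 6 * k -> setlt (Dset k i) (Cset k (i + 1))) /\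
  setlt (Cset k (6 * k + 1)) (Eset k).
Proof.
  assert (hA : forall i, 1 <= i -> Aset k i (i * a))
    by (intros i hi; apply Aset_coord; [lia | exists 0; lia]).
  assert (hB : forall i, 1 <= i -> Bset k i (i * a + 2 * (3 * k) + 1))
    by (intros i hi; apply Bset_coord; [lia | exists (3 * k); lia]).
  assert (hC : forall i, 3 * k + 1 <= i <= 6 * k + 1 -> Cset k i (i * a))
    by (intros i hi; apply Cset_coord; [lia | exists 0, 0; lia]).
  assert (hD : forall i, 3 * k + 1 <= i <= 6 * k -> Dset k i (i * a + 2 * (3 * k) + 1))
    by (intros i hi; apply Dset_coord; [lia | exists (3 * k), 1; lia]).
  unfold setlt; repeat split.
  all: try (intros i hi; split; [|split]).
  all: try (eexists; first [apply hA | apply hB | apply hC | apply hD]; lia).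
  all: try (exists ((6 * k + 1) * a + (6 * k + 1)); unfold Eset; unfold_sets; lia).
  all: intros x y hx hy.
  - apply Aset_coord in hx as (u & hu & ->); apply Bset_coord in hy as (v & hv & ->); lia.
  - apply Bset_coord in hx as (u & hu & ->); apply Aset_coord in hy as (v & hv & ->); lia.
  - apply Bset_coord in hx as (u & hu & ->); apply Cset_coord in hy as (v & q & hv & ->); lia.
  - apply Cset_coord in hx as (u & p & hu & ->); apply Dset_coord in hy as (v & q & hv & ->); lia.
  - apply Dset_coord in hx as (u & p & hu & ->); apply Cset_coord in hy as (v & q & hv & ->); lia.
  - apply Cset_coord in hx as (u & p & hu & ->); [|lia]; unfold Eset in hy; unfold_sets; lia.
Qed.
End Layers.

Definition next_coord (k i u p : nat) : nat * nat * nat :=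
  if (p =? 1) && (u =? 6 * k) then (S i, 0, 0)
  else if i =? 0 then (1, 0, 0)
  else if 6 * k + 2 <=? i then (if p =? 0 then (i, u, 1) else (i, S u, 0))
  else if i <=? 3 * k then
    (if p =? 0 then (if u <? i then (i, S u, 0) else (i, 3 * k, 1))
     else if S u <? 3 * k + i then (i, S u, 1) else (S i, 0, 0))
  else if 2 * u + p + 6 * k + 5 <=? 2 * i then (if p =? 0 then (i, u, 1) else (i, S u, 0))
  else if p =? 0 then
    (if u <? 3 * k then (i, S u, 0) else if u =? 3 * k then (i, 3 * k, 1) else (i, u, 1))
  else if u <? i then (i, S u, 0) else (i, S u, 1).

(* The number of elements of [H8 k] below the point (i, u, p); for instance layer
   i <= 3k holds 2i + 1 elements, so i * i of them lie below it. *)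
Definition rank_coord (k i u p : nat) : nat :=
  if i =? 0 then 0
  else if 6 * k + 2 <=? i then
    (6 * k + 1) * (6 * k + 1) + 3 * k + 1 +
    (i * (12 * k + 2) + 2 * u + p - ((6 * k + 1) * (12 * k + 2) + 6 * k + 1))
  else if i <=? 3 * k then (if p =? 0 then i * i + u else i * i + i + 1 + u - 3 * k)
  else if 2 * u + p + 6 * k + 4 <=? 2 * i then i * i + 3 * k + 2 + 2 * u + p - i
  else if 2 * u + p <=? 6 * k then i * i + u
  else if 2 * u + p <=? 2 * i + 1 then i * i + 2 * u + p - 3 * k
  else i * i + i + 1 + u - 3 * k.

(* The residue mod 3 of the gap from (i, u, p) to the next element; it is wrong
   only after some points whose rank is divisible by 3. *)
Definition step_residue (k i u p : nat) : nat :=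
  if 6 * k + 2 <=? i then 1
  else if i <=? 3 * k then 2
  else if 2 * u + p + 6 * k + 5 <=? 2 * i then 1
  else if p =? 0 then (if u <? 3 * k then 2 else 1)
  else if (u <? i) || (u =? 6 * k) then 1 else 2.

Ltac split_ifs := repeat (first
  [ match goal with H : (_, _) = (_, _) |- _ => injection H as; subst end
  | match goal with |- context [if ?c then _ else _] => destruct c eqn:? end
  | match goal with H : context [if ?c then _ else _] |- _ => destruct c eqn:? end ];
  try (exfalso; lia)).

Lemma step_residue_nonzero k i u p : step_residue k i u p <> 0.
Proof. unfold step_residue; split_ifs; lia. Qed.

Section Successor.
Variable k : nat.
Hypothesis hk : 1 <= k.
Local Notation a := (12 * k + 2).

Lemma next_coord_spec i u p i' u' p' :
  p <= 1 -> 2 * u + p < a -> layer_mem k i u p -> next_coord k i u p = (i', u', p') ->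
  p' <= 1 /\ 2 * u' + p' < a /\ layer_mem k i' u' p' /\
  (i' = i /\ 2 * u + p < 2 * u' + p' \/ i' = S i /\ u' = 0 /\ p' = 0).
Proof. intros hp ht hL hn; unfold next_coord in hn; unfold layer_mem in *; split_ifs; lia. Qed.

Lemma next_coord_least i u p i' u' p' uz pz :
  p <= 1 -> 2 * u + p < a -> layer_mem k i u p -> next_coord k i u p = (i', u', p') ->
  pz <= 1 -> 2 * u + p < 2 * uz + pz < a -> (i' = i -> 2 * uz + pz < 2 * u' + p') ->
  ~ layer_mem k i uz pz.
Proof. intros hp ht hL hn; unfold next_coord in hn; unfold layer_mem in *; split_ifs; lia. Qed.

Lemma rank_next_coord i u p i' u' p' :
  p <= 1 -> 2 * u + p < a -> layer_mem k i u p -> next_coord k i u p = (i', u', p') ->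
  rank_coord k i' u' p' = S (rank_coord k i u p).
Proof.
  intros hp ht hL hn; unfold next_coord in hn; unfold layer_mem in *.
  (* the nonlinear facts needed where layer 6k + 1 meets E *)
  assert (i <= i * i) by nia.
  assert (i = 6 * k + 1 -> i * i = (6 * k + 1) * (6 * k + 1) /\ i * a = (6 * k + 1) * a)
    by (intros ->; split; reflexivity).
  assert (6 * k + 2 <= i -> (6 * k + 2) * a <= i * a) by (intros; apply Nat.mul_le_mono_r; lia).
  split_ifs; unfold rank_coord; split_ifs; lia.
Qed.

Lemma next_coord_gap_residue i u p i' u' p' :
  p <= 1 -> 2 * u + p < a -> layer_mem k i u p -> next_coord k i u p = (i', u', p') ->
  rank_coord k i u p mod 3 <> 0 ->
  (i' * a + 2 * u' + p' - (i * a + 2 * u + p)) mod 3 = step_residue k i u p.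
Proof.
  intros hp ht hL hn; pose proof (square_mod3 i).
  unfold next_coord in hn; unfold layer_mem, rank_coord, step_residue in *.
  split_ifs; lia.
Qed.

Lemma step_residue_next i u p i' u' p' :
  p <= 1 -> 2 * u + p < a -> layer_mem k i u p -> next_coord k i u p = (i', u', p') ->
  rank_coord k i u p mod 3 = 1 -> step_residue k i' u' p' = step_residue k i u p.
Proof.
  intros hp ht hL hn; pose proof (square_mod3 i).
  unfold next_coord in hn; unfold layer_mem in *; split_ifs;
  unfold rank_coord in *; split_ifs; unfold step_residue; split_ifs; lia.
Qed.
End Successor.

Definition coord_val (k : nat) (c : nat * nat * nat) : nat :=
  let '(i, u, p) := c in i * (12 * k + 2) + 2 * u + p.

Definition coord_of (k x : nat) : nat * nat * nat :=
  (x / (12 * k + 2), (x mod (12 * k + 2)) / 2, (x mod (12 * k + 2)) mod 2).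

Definition H8_next (k x : nat) : nat :=
  let '(i, u, p) := coord_of k x in coord_val k (next_coord k i u p).

Definition H8_rank (k x : nat) : nat :=
  let '(i, u, p) := coord_of k x in rank_coord k i u p.

Lemma coord_of_val k i u p :
  p <= 1 -> 2 * u + p < 12 * k + 2 -> coord_of k (i * (12 * k + 2) + 2 * u + p) = (i, u, p).
Proof.
  intros hp ht; unfold coord_of.
  rewrite <- (Nat.div_unique _ _ i (2 * u + p)), <- (Nat.mod_unique _ _ i (2 * u + p)) by lia.
  f_equal; [f_equal|]; lia.
Qed.

Section Enumeration.
Variable k : nat.
Hypothesis hk : 1 <= k.
Local Notation a := (12 * k + 2).
Local Notation enum n := (Nat.iter n (H8_next k) 0).

Lemma H8_next_val i u p :
  p <= 1 -> 2 * u + p < a ->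
  H8_next k (i * a + 2 * u + p) = coord_val k (next_coord k i u p) /\
  H8_rank k (i * a + 2 * u + p) = rank_coord k i u p.
Proof. intros hp ht; unfold H8_next, H8_rank; rewrite coord_of_val by assumption; auto. Qed.

Lemma H8_next_spec x :
  layered k x ->
  layered k (H8_next k x) /\ x < H8_next k x /\
  (forall z, x < z < H8_next k x -> ~ layered k z) /\
  H8_rank k (H8_next k x) = S (H8_rank k x).
Proof.
  intros (i & u & p & hp & ht & -> & hL).
  destruct (H8_next_val i u p hp ht) as [-> ->].
  destruct (next_coord k i u p) as [[i' u'] p'] eqn:hn.
  destruct (next_coord_spec k hk i u p i' u' p' hp ht hL hn) as (hp' & ht' & hL' & hstep).
  unfold coord_val; rewrite (proj2 (H8_next_val i' u' p' hp' ht')).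
  split; [exists i', u', p'; auto|].
  split; [destruct hstep as [[-> ?] | (-> & -> & ->)]; lia|].
  split; [|exact (rank_next_coord k hk i u p i' u' p' hp ht hL hn)].
  intros z hz (iz & uz & pz & hpz & htz & -> & hLz).
  assert (iz = i) as ->.
  { apply (layer_index a _ _ (2 * uz + pz) htz).
    destruct hstep as [[-> ?] | (-> & -> & ->)]; lia. }
  assert (2 * u + p < 2 * uz + pz) by lia.
  refine (next_coord_least k hk i u p i' u' p' uz pz hp ht hL hn hpz _ _ hLz);
    [lia | intros ->; lia].
Qed.

Lemma H8_next_gaps_mod3 x :
  layered k x -> H8_rank k x mod 3 = 1 ->
  (H8_next k x - x) mod 3 = (H8_next k (H8_next k x) - H8_next k x) mod 3 /\
  (H8_next k x - x) mod 3 <> 0.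
Proof.
  intros (i & u & p & hp & ht & -> & hL) hr.
  destruct (H8_next_val i u p hp ht) as [-> hri]; rewrite hri in hr.
  destruct (next_coord k i u p) as [[i' u'] p'] eqn:hn.
  destruct (next_coord_spec k hk i u p i' u' p' hp ht hL hn) as (hp' & ht' & hL' & _).
  pose proof (rank_next_coord k hk i u p i' u' p' hp ht hL hn) as hr'.
  unfold coord_val; destruct (H8_next_val i' u' p' hp' ht') as [-> _].
  destruct (next_coord k i' u' p') as [[i'' u''] p''] eqn:hn'; unfold coord_val.
  rewrite (next_coord_gap_residue k hk i u p i' u' p' hp ht hL hn) by lia.
  rewrite (next_coord_gap_residue k hk i' u' p' i'' u'' p'' hp' ht' hL' hn') by lia.
  rewrite (step_residue_next k hk i u p i' u' p' hp ht hL hn hr).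
  split; [reflexivity | apply step_residue_nonzero].
Qed.

Lemma layered_0 : layered k 0.
Proof. exists 0, 0, 0; unfold layer_mem; lia. Qed.

Lemma H8_is_enum : is_enum (H8 k) (fun n => enum n).
Proof.
  pose proof (H8_iff_layered k hk) as hH.
  apply iter_next_is_enum; [apply hH, layered_0 | ..]; intros x;
    [| | intros z]; rewrite ?hH; intros hx; destruct (H8_next_spec x hx) as (h1 & h2 & h3 & _).
  - exact h1.
  - exact h2.
  - apply h3.
Qed.

Lemma H8_rank_enum n : H8_rank k (enum n) = n.
Proof.
  apply (rank_enum (layered k) (H8_next k) layered_0
           (fun x hx => proj1 (H8_next_spec x hx))).
  - exact (proj2 (H8_next_val 0 0 0 ltac:(lia) ltac:(lia))).
  - intros x hx; apply (H8_next_spec x hx).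
Qed.

Lemma enum_generators : enum 1 = aa k /\ enum 2 = aa k + 2 /\ enum 3 = aa k + ha k.
Proof.
  assert (e1 : enum 1 = 1 * a + 2 * 0 + 0).
  { exact (proj1 (H8_next_val 0 0 0 ltac:(lia) ltac:(lia))). }
  assert (e2 : enum 2 = 1 * a + 2 * 1 + 0).
  { change (enum 2) with (H8_next k (enum 1)); rewrite e1.
    rewrite (proj1 (H8_next_val 1 0 0 ltac:(lia) ltac:(lia))).
    unfold next_coord; split_ifs; reflexivity. }
  assert (e3 : enum 3 = 1 * a + 2 * (3 * k) + 1).
  { change (enum 3) with (H8_next k (enum 2)); rewrite e2.
    rewrite (proj1 (H8_next_val 1 1 0 ltac:(lia) ltac:(lia))).
    unfold next_coord; split_ifs; reflexivity. }
  rewrite e1, e2, e3, ha_eq; unfold aa; lia.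
Qed.

Lemma H8_numerical_semigroup : numerical_semigroup (H8 k).
Proof.
  split; [left; reflexivity | split].
  - intros x y; rewrite <- !(Gk_iff_H8 k hk); apply gen_add.
  - exists (seq 0 ((6 * k + 1) * aa k + ha k)); intros x hx; apply in_seq.
    enough (~ (6 * k + 1) * aa k + ha k <= x) by lia; intros hE.
    apply hx; right; right; right; right; exact hE.
Qed.

Lemma H8_perm_num_semigroup : perm_num_semigroup 3 (H8 k).
Proof.
  split; [exact H8_numerical_semigroup|].
  exists (fun n => enum n); split; [exact H8_is_enum | split].
  - intros x; rewrite <- (Gk_iff_H8 k hk); destruct enum_generators as (e1 & e2 & e3).
    split; apply gen_mono.
    + intros y [-> | [-> | ->]]; [exists 1 | exists 2 | exists 3]; split; auto; lia.
    + intros y (j & hj & ->); assert (j = 1 \/ j = 2 \/ j = 3) as [-> | [-> | ->]] by lia; auto.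
  - intros m c hc.
    assert (hx : layered k (enum (m * 3 + 1))).
    { apply H8_iff_layered, H8_is_enum; [exact hk | exists (m * 3 + 1); reflexivity]. }
    pose proof (H8_rank_enum (m * 3 + 1)) as hr.
    destruct (H8_next_gaps_mod3 _ hx ltac:(lia)) as [hgap hnz].
    replace (H8_next k (enum (m * 3 + 1))) with (enum (m * 3 + 2)) in * by
      (replace (m * 3 + 2) with (S (m * 3 + 1)) by lia; reflexivity).
    replace (H8_next k (enum (m * 3 + 2))) with (enum (m * 3 + 3)) in * by
      (replace (m * 3 + 3) with (S (m * 3 + 2)) by lia; reflexivity).
    apply residues_of_equal_gaps; auto.
    destruct H8_is_enum as [hinc _]; split; apply Nat.lt_le_incl, hinc; lia.
Qed.
End Enumeration.

Theorem lemma4p8 (k : nat) (hk : 1 <= k) :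
  (* (1) *)
  (forall x, Gk k x <->
     exists q r s, r <= q /\ x = q * aa k + 2 * r + s * (aa k + ha k)) /\
  (* (2) *)
  (forall x, Gk k x <-> H8 k x) /\
  (* (3) *)
  (forall i, 1 <= i <= 3 * k -> setlt (Aset k i) (Bset k i)) /\
  (forall i, 1 <= i <= 3 * k - 1 -> setlt (Bset k i) (Aset k (i + 1))) /\
  setlt (Bset k (3 * k)) (Cset k (3 * k + 1)) /\
  (forall i, 3 * k + 1 <= i <= 6 * k -> setlt (Cset k i) (Dset k i)) /\
  (forall i, 3 * k + 1 <= i <= 6 * k -> setlt (Dset k i) (Cset k (i + 1))) /\
  setlt (Cset k (6 * k + 1)) (Eset k) /\
  (* (4) *)
  perm_num_semigroup 3 (H8 k).
Proof.
  split; [exact (fun x => gen_three_iff _ _ x)|].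
  split; [exact (Gk_iff_H8 k hk)|].
  destruct (blocks_ordered k hk) as (h1 & h2 & h3 & h4 & h5 & h6).
  repeat (split; [assumption|]).
  exact (H8_perm_num_semigroup k hk).
Qed.
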